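(* Let $\mathcal{L}=(L,\wedge,\vee,0,1)$ be a complete lattice and let $p\in L$ be strongly irreducible in $L$. Then $p$ is irreducible in $L$, and at least one of the following holds: (i) there exists $p'\in L$ with $p'<p$ and an element $q\in L$ with $q\geq p'$ such that $p$ is a pseudo-complement of $q$ in the lattice $\{x\in L\mid p'\leq x\}$ and the interval $[p',q]$ is uniform; (ii) $p$ is a waist in $L$.
   Context: For a lower semilattice $(L,\wedge)$, an element $p$ is irreducible if for all $a,b\in L$ with $p\leq a$ and $p\leq b$: $a\wedge b\leq p$ implies $a\leq p$ or $b\leq p$; it is strongly irreducible if this implication holds for all $a,b\in L$. For $a\leq b$, $[a,b]=\{x\in L\mid a\leq x\leq b\}$. A lower semilattice with least element $z$ is uniform if $z$ is irreducible in it, i.e. $x\wedge y=z$ implies $x=z$ or $y=z$. A pseudo-complement of an element $a$ in a semilattice with least element $z$ is the greatest element $x$ with $a\wedge x=z$. A waist is an element comparable to every element of $L$. *)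

From mathcomp Require Import all_boot all_order.
Set Implicit Arguments. Unset Strict Implicit. Unset Printing Implicit Defensive.
Import Order.TTheory.
Local Open Scope order_scope.

Definition complete_lattice {d} (L : latticeType d) : Prop :=
  forall S : L -> Prop, exists s : L,
    (forall x, S x -> x <= s) /\
    (forall u, (forall x, S x -> x <= u) -> s <= u).

Definition irreducible {d} (L : latticeType d) (p : L) : Prop :=
  forall a b : L, p <= a -> p <= b -> a `&` b <= p -> a <= p \/ b <= p.

Definition strongly_irreducible {d} (L : latticeType d) (p : L) : Prop :=
  forall a b : L, a `&` b <= p -> a <= p \/ b <= p.

Definition uniform_interval {d} (L : latticeType d) (lo hi : L) : Prop :=
  forall x y : L, lo <= x <= hi -> lo <= y <= hi ->
    x `&` y = lo -> x = lo \/ y = lo.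

(* p is the pseudo-complement of q in the semilattice {x | lo <= x},
   whose least element is lo. *)
Definition pseudo_complement_above {d} (L : latticeType d) (lo q p : L) : Prop :=
  lo <= p /\ q `&` p = lo /\
  (forall x : L, lo <= x -> q `&` x = lo -> x <= p).

Definition waist {d} (L : latticeType d) (p : L) : Prop :=
  forall x : L, x <= p \/ p <= x.

From mathcomp Require Import all_boot all_order.
From Stdlib Require Import Classical.
Import Order.TTheory.
Local Open Scope order_scope.

(* If p is not a waist, pick x incomparable to p.  Strong irreducibility of p
   then makes p the pseudo-complement of x above p' := p `&` x, and every
   meet equal to p' inside [p', x] lies below p, hence below p `&` x = p'. *)

Section StronglyIrreducible.

Variables (d : Order.disp_t) (L : latticeType d) (p : L).
Hypothesis p_sirr : strongly_irreducible p.

Lemma strongly_irreducible_irreducible : irreducible p.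
Proof. by move=> a b _ _ /p_sirr. Qed.

Lemma strongly_irreducible_pseudo_complement (x : L) :
  ~~ (x <= p) -> pseudo_complement_above (p `&` x) x p.
Proof.
move=> xNp; split; first exact: leIl.
split; first by rewrite meetC.
move=> y _ xy_eq.
have : x `&` y <= p by rewrite xy_eq leIl.
by case/p_sirr => // xp; rewrite xp in xNp.
Qed.

Lemma strongly_irreducible_uniform_interval (x : L) :
  uniform_interval (p `&` x) x.
Proof.
have meet_lo a : p `&` x <= a <= x -> a <= p -> a = p `&` x.
  by case/andP=> lo_a a_x a_p; apply/eqP; rewrite eq_le lexI a_p a_x lo_a.
move=> a b a_in b_in ab_eq.
have : a `&` b <= p by rewrite ab_eq leIl.
by case/p_sirr => [/(meet_lo _ a_in)|/(meet_lo _ b_in)]; [left|right].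
Qed.

End StronglyIrreducible.

Lemma not_waist_incomparable {d} {L : latticeType d} {p : L} :
  ~ waist p -> exists x : L, ~~ (x <= p) /\ ~~ (p <= x).
Proof.
move=> pNwaist; apply: NNPP => noWitness; apply: pNwaist => x.
case: (boolP (x <= p)) => [|xNp]; first by left.
case: (boolP (p <= x)) => [|pNx]; first by right.
by case: noWitness; exists x.
Qed.

Theorem theorem1p16 (d : Order.disp_t) (L : latticeType d) (p : L) :
  complete_lattice L ->
  strongly_irreducible p ->
  irreducible p /\
  ((exists p' q : L, p' < p /\ p' <= q /\
      pseudo_complement_above p' q p /\ uniform_interval p' q)
   \/ waist p).
Proof.
move=> _ p_sirr; split; first exact: strongly_irreducible_irreducible.
have [pwaist|pNwaist] := classic (waist p); [by right|left].
have [x [xNp pNx]] := not_waist_incomparable pNwaist.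
exists (p `&` x), x; split; last split; last split.
- by rewrite lt_leAnge leIl lexI lexx.
- exact: leIr.
- exact: strongly_irreducible_pseudo_complement.
- exact: strongly_irreducible_uniform_interval.
Qed.
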